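(* Let $q$ be a prime power and $h\geq 2$ an integer. Then for each $t\in\{2,3\}$ there exists a $t$-fold blocking set of size $t(q^h+q^{h-1}+1)$ in $\mathrm{PG}(2,q^h)$.
   Context: $\mathrm{PG}(2,q^h)$ denotes the Desarguesian projective plane over $\mathbb{F}_{q^h}$. A $t$-fold blocking set is a set of points meeting every line in at least $t$ points. *)

(* PG(2,F) over a finite field F: points / lines are the
   1- / 2-dimensional subspaces of F^3, represented canonically (via the
   mxalgebra closure <<_>>) by 3x3 matrices whose row space is the subspace. *)
From mathcomp Require Import all_boot all_algebra all_field.
Set Implicit Arguments. Unset Strict Implicit. Unset Printing Implicit Defensive.

Definition prime_power (q : nat) : Prop :=
  exists p k : nat, prime p /\ (0 < k)%N /\ q = (p ^ k)%N.

Definition pg_point (F : finFieldType) (P : 'M[F]_3) : bool :=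
  (\rank P == 1%N) && (<<P>>%MS == P).

Definition pg_line (F : finFieldType) (L : 'M[F]_3) : bool :=
  (\rank L == 2%N) && (<<L>>%MS == L).

Definition pg_incident (F : finFieldType) (P L : 'M[F]_3) : bool := (P <= L)%MS.

Definition t_fold_blocking_set (F : finFieldType) (t : nat) (B : {set 'M[F]_3}) : Prop :=
  (forall P, P \in B -> pg_point P) /\
  (forall L, pg_line L -> (t <= #|[set P in B | pg_incident P L]|)%N).

(* Let K = F_q be the subfield of F = F_(q^h) fixed by x |-> x^q and Tr the
   trace of F over K.  For theta in F, the points <(x, Tr(theta x), c)> with
   c in K form a K-linear set A of rank h + 1.  A line of PG(2, F) is the kernel
   of one F-linear form; restricted to this K-space of size q^(h+1) > |F| the
   form has a nonzero zero, so A meets every line, and sorting the points of A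
   into affine points and points at infinity gives |A| <= q^h + q^(h-1) + 1.
   Counting fibres of the trace yields theta, omega and alpha for which the
   collineation psi : (a, b, c) |-> (b - omega c, c + omega r a, r a), with
   r = theta / alpha, satisfies psi^3 = r and moves every point of A off A.
   Then A, A psi and A psi^2 are pairwise disjoint blocking sets; the union of
   t of them, padded with further points, is the required t-fold blocking set. *)

From HB Require Import structures.
From mathcomp Require Import all_boot all_algebra all_field.
From mathcomp Require Import ring zify.
Set Implicit Arguments. Unset Strict Implicit. Unset Printing Implicit Defensive.
Import GRing.Theory.
Local Open Scope ring_scope.

Section Vec3.
Variable R : pzRingType.

Definition vec3 (a b c : R) : 'rV[R]_3 := \row_(j < 3) [:: a; b; c]`_j.

Lemma vec3_eta (v : 'rV[R]_3) : v = vec3 (v 0 0) (v 0 1) (v 0 2).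
Proof. by apply/rowP => -[[|[|[|j]]] lt_j3] //; rewrite mxE; congr (v _ _); apply: val_inj. Qed.

Lemma vec3_inj a b c a' b' c' :
  vec3 a b c = vec3 a' b' c' -> [/\ a = a', b = b' & c = c'].
Proof.
move=> e; have /rowP e' := e.
by split; [move: (e' 0) | move: (e' 1) | move: (e' 2)]; rewrite !mxE.
Qed.

Lemma vec3Z l a b c : l *: vec3 a b c = vec3 (l * a) (l * b) (l * c).
Proof. by apply/rowP => -[[|[|[|j]]] lt_j3]; rewrite !mxE. Qed.

Lemma vec3B a b c a' b' c' :
  vec3 a b c - vec3 a' b' c' = vec3 (a - a') (b - b') (c - c').
Proof. by apply/rowP => -[[|[|[|j]]] lt_j3]; rewrite !mxE //= subrr. Qed.

Lemma vec3_eq0 a b c : (vec3 a b c == 0) = [&& a == 0, b == 0 & c == 0].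
Proof.
apply/eqP/and3P => [/(congr1 (fun v : 'rV_3 => [:: v 0 0; v 0 1; v 0 2]))|].
  by rewrite !mxE => -[-> -> ->].
by case=> /eqP-> /eqP-> /eqP->; apply/rowP => -[[|[|[|j]]] lt_j3]; rewrite !mxE.
Qed.

End Vec3.

Section ProjectivePlane.
Variable F : finFieldType.
Implicit Types (P L M N : 'M[F]_3) (S T A B : {set 'M[F]_3}).

Definition pg_points : {set 'M[F]_3} := [set P | pg_point P].

Lemma in_pg_points P : (P \in pg_points) = pg_point P.
Proof. by rewrite inE. Qed.

Definition pt (v : 'rV[F]_3) : 'M[F]_3 := <<v>>%MS.

Lemma ptP (v w : 'rV[F]_3) : pt v = pt w -> exists l, v = l *: w.
Proof. by move=> e; apply/sub_rVP; rewrite -(genmxE w) -/(pt w) -e genmxE. Qed.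

Lemma pt_point (v : 'rV[F]_3) : v != 0 -> pg_point (pt v).
Proof. by move=> v0; rewrite /pg_point genmx_id eqxx andbT genmxE rank_rV v0. Qed.

Lemma ptZ (l : F) (v : 'rV[F]_3) : l != 0 -> pt (l *: v) = pt v.
Proof. by move=> l0; apply: eq_genmx; apply: eqmx_scale. Qed.

Definition pimage M S : {set 'M[F]_3} := [set <<P *m M>>%MS | P in S].

Lemma mem_pimage M S P : P \in S -> <<P *m M>>%MS \in pimage M S.
Proof. exact: imset_f. Qed.

Lemma genmx_genM m (X : 'M[F]_(m, 3)) M : <<<<X>>%MS *m M>>%MS = <<X *m M>>%MS.
Proof. by apply: eq_genmx; apply: eqmxMr; apply: genmxE. Qed.

Lemma pimageM M N S : pimage N (pimage M S) = pimage (M *m N) S.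
Proof.
by rewrite /pimage -imset_comp; apply: eq_imset => P /=; rewrite genmx_genM mulmxA.
Qed.

Lemma pimage_scalar (a : F) S :
  a != 0 -> {in S, forall P, <<P>>%MS = P} -> pimage a%:M S = S.
Proof.
move=> a0 canS; rewrite -[RHS]imset_id; apply: eq_in_imset => P SP.
by rewrite mul_mx_scalar -[RHS]canS //; apply: eq_genmx; apply: eqmx_scale.
Qed.

Lemma pimage_inj M :
  M \in unitmx -> {in [pred P | <<P>>%MS == P] &, injective (fun P => <<P *m M>>%MS)}.
Proof.
move=> Mu P Q /eqP canP /eqP canQ /genmxP/eqmxP eqPQM.
by rewrite -canP -canQ; apply/genmxP/eqmxP; apply: eqmxMfree eqPQM; rewrite row_free_unit.
Qed.

Lemma rank_pimage M P : M \in unitmx -> \rank <<P *m M>>%MS = \rank P.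
Proof. by move=> Mu; rewrite genmxE mxrankMfree ?row_free_unit. Qed.

Lemma pg_point_pimage M P : M \in unitmx -> pg_point P -> pg_point <<P *m M>>%MS.
Proof. by move=> Mu /andP[rP _]; rewrite /pg_point genmx_id eqxx andbT rank_pimage. Qed.

Lemma pg_line_pimage M L : M \in unitmx -> pg_line L -> pg_line <<L *m M>>%MS.
Proof. by move=> Mu /andP[rL _]; rewrite /pg_line genmx_id eqxx andbT rank_pimage. Qed.

Lemma pg_incident_pimage M P L :
  pg_incident P L -> pg_incident <<P *m M>>%MS <<L *m M>>%MS.
Proof. by rewrite /pg_incident !genmxE; apply: submxMr. Qed.

Lemma cube_scalar_unitmx M (r : F) : r != 0 -> M *m M *m M = r%:M -> M \in unitmx.
Proof.
move=> r0 M3; have /mulmx1_unit[] // : M *m (r^-1 *: (M *m M)) = 1%:M.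
by rewrite -scalemxAr mulmxA M3 scale_scalar_mx mulVf.
Qed.

Lemma pimageI M S T : M \in unitmx ->
    {in S, forall P, <<P>>%MS = P} -> {in T, forall P, <<P>>%MS = P} ->
  pimage M (S :&: T) = pimage M S :&: pimage M T.
Proof.
move=> Mu canS canT; apply: imsetI => P Q SP TQ.
by apply: pimage_inj; rewrite // inE ?(canS P SP) ?(canT Q TQ).
Qed.

Lemma pimage_orbit_disjoint M (r : F) S :
    r != 0 -> M *m M *m M = r%:M -> {in S, forall P, <<P>>%MS = P} ->
    [disjoint S & pimage M S] ->
  [disjoint pimage M S & pimage (M *m M) S] /\ [disjoint S & pimage (M *m M) S].
Proof.
move=> r0 M3 canS; have Mu := cube_scalar_unitmx r0 M3.
have canM N : {in pimage N S, forall P, <<P>>%MS = P}.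
  by move=> _ /imsetP[P _ ->]; rewrite genmx_id.
rewrite -!setI_eq0 => /eqP SSM0; split.
  by rewrite -pimageM -pimageI // SSM0 /pimage imset0.
rewrite -(imset_eq0 (fun P => <<P *m M>>%MS)) -/(pimage M _) pimageI //.
by rewrite pimageM M3 pimage_scalar // setIC SSM0.
Qed.

Lemma t_fold_blocking_setU s t A B :
    [disjoint A & B] -> t_fold_blocking_set s A -> t_fold_blocking_set t B ->
  t_fold_blocking_set (s + t) (A :|: B).
Proof.
move=> dAB [ptA blA] [ptB blB]; split=> [P /setUP[/ptA|/ptB] //|L lineL].
have -> : [set P in A :|: B | pg_incident P L] =
    [set P in A | pg_incident P L] :|: [set P in B | pg_incident P L].
  by apply/setP => P; rewrite !inE andb_orl.
rewrite cardsU disjoint_setI0 ?cards0 ?subn0 ?leq_add ?blA ?blB //.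
by apply: disjointWl (disjointWr _ dAB); apply/subsetP => P; rewrite inE => /andP[].
Qed.

Lemma t_fold_blocking_setS t B B' : B \subset B' -> {in B', forall P, pg_point P} ->
  t_fold_blocking_set t B -> t_fold_blocking_set t B'.
Proof.
move=> sBB' ptB' [_ blB]; split=> // L lineL; apply: leq_trans (blB L lineL) _.
by apply/subset_leq_card/subsetP => P; rewrite !inE => /andP[/(subsetP sBB') -> ->].
Qed.

Lemma t_fold_blocking_set_pad t B n :
    t_fold_blocking_set t B -> (#|B| <= n <= #|pg_points|)%N ->
  exists B', t_fold_blocking_set t B' /\ #|B'| = n.
Proof.
move=> blB /andP[leBn len]; have ptB := blB.1.
set C := pg_points :\: B.
have /card_geqP[s [uniq_s size_s sCs]] : (n - #|B| <= #|C|)%N.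
  suff -> : #|C| = (#|pg_points| - #|B|)%N by rewrite leq_sub2r.
  by rewrite cardsD (setIidPr _) //; apply/subsetP => P /ptB; rewrite in_pg_points.
have disjBs : [disjoint B & [set P in s]].
  rewrite -setI_eq0; apply/eqP/setP => P; rewrite !inE.
  by apply/negP => /andP[PB /sCs]; rewrite inE PB.
exists (B :|: [set P in s]); split.
  apply: t_fold_blocking_setS blB; first exact: subsetUl.
  by move=> P /setUP[/ptB //|]; rewrite inE => /sCs; rewrite inE in_pg_points => /andP[].
rewrite cardsU disjoint_setI0 // cards0 subn0 cardsE (card_uniqP uniq_s) size_s.
by rewrite subnKC.
Qed.

Lemma blocking_pimage M A : M \in unitmx ->
  t_fold_blocking_set 1 A -> t_fold_blocking_set 1 (pimage M A).
Proof.
move=> Mu [ptA blA]; split=> [_ /imsetP[P AP ->]|L lineL].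
  exact: pg_point_pimage (ptA P AP).
have lineL' : pg_line <<L *m invmx M>>%MS by rewrite pg_line_pimage ?unitmx_inv.
have /card_gt0P[P] := blA _ lineL'.
rewrite inE => /andP[AP /(pg_incident_pimage M)].
rewrite genmx_genM mulmxKV // (eqP (andP lineL).2) => PML.
by apply/card_gt0P; exists <<P *m M>>%MS; rewrite inE PML mem_pimage.
Qed.

Lemma card_pg_points_ge : (#|F| * #|F| + #|F| + 1 <= #|pg_points|)%N.
Proof.
pose nv (o : option (F * F + F)) := match o with
  | Some (inl (x, y)) => vec3 x y 1 | Some (inr x) => vec3 x 1 0 | None => vec3 1 0 0 end.
have nv0 o : nv o != 0 by case: o => [[[x y]|x]|]; rewrite vec3_eq0 oner_eq0 ?andbF.
have nv_inj : injective (pt \o nv).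
  move=> [[[x y]|x]|] [[[x' y']|x']|] /ptP[l]; rewrite vec3Z => /vec3_inj[];
  rewrite ?(mulr0, mulr1, mul0r) => e1 e2 e3; subst; rewrite ?mul1r //;
  (* distinct normal forms force [1 = 0] *)
  match goal with e : _ = _ |- _ => by move: (oner_neq0 F); rewrite e ?mul0r eqxx end.
have /subset_leq_card : [set pt (nv o) | o in [set: option (F * F + F)]] \subset pg_points.
  by apply/subsetP => _ /imsetP[o _ ->]; rewrite in_pg_points pt_point.
rewrite card_imset ?cardsT ?card_option ?card_sum ?card_prod //.
by rewrite addn1.
Qed.

Lemma t_fold_blocking_set_orbit M (r : F) A n t :
    r != 0 -> M *m M *m M = r%:M ->
    t_fold_blocking_set 1 A -> [disjoint A & pimage M A] -> (#|A| <= n)%N ->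
    (0 < t <= 3)%N -> (t * n <= #|pg_points|)%N ->
  exists B, t_fold_blocking_set t B /\ #|B| = (t * n)%N.
Proof.
move=> r0 M3 blA dAM leAn t13 letn.
have Mu := cube_scalar_unitmx r0 M3.
have canA : {in A, forall P, <<P>>%MS = P} by move=> P /blA.1/andP[_ /eqP].
have [dAM_AM2 dA_AM2] := pimage_orbit_disjoint r0 M3 canA dAM.
have leAMn N : (#|pimage N A| <= n)%N by apply: leq_trans (leq_imset_card _ _) leAn.
have blAM N : N \in unitmx -> t_fold_blocking_set 1 (pimage N A).
  by move=> Nu; apply: blocking_pimage.
suff : exists2 B0 : {set 'M[F]_3}, t_fold_blocking_set t B0 & (#|B0| <= t * n)%N.
  by case=> B0 blB0 leB0; apply: (t_fold_blocking_set_pad blB0); rewrite leB0.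
case: t t13 {letn} => [|[|[|[|]]]] //= _.
- by exists A; rewrite ?mul1n.
- exists (A :|: pimage M A); first exact: t_fold_blocking_setU dAM blA (blAM _ Mu).
  by rewrite (leq_trans (leq_card_setU _ _)) // mul2n -addnn leq_add.
exists (A :|: pimage M A :|: pimage (M *m M) A).
  apply: (@t_fold_blocking_setU 2).
  - by rewrite -setI_eq0 setIUl setU_eq0 !setI_eq0 dA_AM2 dAM_AM2.
  - exact: t_fold_blocking_setU dAM blA (blAM _ Mu).
  - by apply: blAM; rewrite unitmx_mul Mu.
rewrite (leq_trans (leq_card_setU _ _)) // (mulSn 2) addnC leq_add //.
by rewrite (leq_trans (leq_card_setU _ _)) // mul2n -addnn leq_add.
Qed.

End ProjectivePlane.

Lemma card_roots_lt (R : finIdomainType) (p : {poly R}) :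
  p != 0 -> (#|[set x | root p x]| < size p)%N.
Proof.
move=> p0; rewrite cardE; apply: max_poly_roots p0 _ (enum_uniq _).
by apply/allP => x; rewrite mem_enum inE.
Qed.

Lemma exists_collision (T U : finType) (D : {set T}) (f : T -> U) :
  (#|U| < #|D|)%N -> exists x y, [/\ x \in D, y \in D, x != y & f x = f y].
Proof.
move=> ltUD; pose coll xy := [&& xy.1 \in D, xy.2 \in D, xy.1 != xy.2 & f xy.1 == f xy.2].
case: (pickP coll) => [[x y] /and4P[Dx Dy xy /eqP fxy]|nocoll]; first by exists x, y.
have injf : {in D &, injective f}.
  move=> x y Dx Dy fxy; apply/eqP; apply: contraFT (nocoll (x, y)) => xy.
  by rewrite /coll /= Dx Dy xy fxy eqxx.
by have := max_card (f @: D); rewrite card_in_imset // leqNgt ltUD.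
Qed.

Lemma leq_card_bigcup (I T : finType) (P : pred I) (A : I -> {set T}) :
  (#|\bigcup_(i | P i) A i| <= \sum_(i | P i) #|A i|)%N.
Proof.
elim/big_rec2: _ => [|i B n _ IH]; first by rewrite cards0.
by rewrite (leq_trans (leq_card_setU _ _)) ?leq_add2l.
Qed.

Lemma exists_notin (T : finType) (A : {set T}) : (#|A| < #|T|)%N -> exists x, x \notin A.
Proof.
move=> ltAT; have /card_gt0P[x] : (0 < #|~: A|)%N by rewrite -(cardsC A) in ltAT; lia.
by exists x; rewrite -in_setC.
Qed.

Section RelativeTrace.
Variables (F : finFieldType) (q h : nat).
Hypotheses (q_gt1 : (1 < q)%N) (pcharF_q : [pchar F].-nat q).
Hypotheses (cardF : #|F| = (q ^ h)%N) (h_gt1 : (1 < h)%N).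

Definition frob_fixed_pred := fun x : F => x ^+ q == x.
Definition frob_fixed : qualifier 0 F := [qualify x | frob_fixed_pred x].

Fact frob_fixed_divring_closed : divring_closed frob_fixed.
Proof.
split=> [|x y|x y]; rewrite !qualifE /frob_fixed_pred ?expr1n // => /eqP xq /eqP yq.
  by rewrite exprDn_pchar // exprNn_pchar // xq yq.
by rewrite exprMn exprVn xq yq.
Qed.

HB.instance Definition _ :=
  GRing.isDivringClosed.Build F frob_fixed_pred frob_fixed_divring_closed.

Lemma frob_fixedXq k i : k \is frob_fixed -> k ^+ (q ^ i) = k.
Proof.
move=> /eqP kq; elim: i => [|i IHi]; first by rewrite expr1.
by rewrite expnSr exprM IHi kq.
Qed.

Definition rel_trace (x : F) := \sum_(i < h) x ^+ (q ^ i).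

Lemma rel_traceB x y : rel_trace (x - y) = rel_trace x - rel_trace y.
Proof.
rewrite -sumrB; apply: eq_bigr => i _.
by rewrite exprDn_pchar ?exprNn_pchar // pnatX pcharF_q.
Qed.

Lemma rel_trace0 : rel_trace 0 = 0.
Proof. by have := rel_traceB 0 0; rewrite !subrr. Qed.

Lemma rel_traceN x : rel_trace (- x) = - rel_trace x.
Proof. by rewrite -sub0r rel_traceB rel_trace0 sub0r. Qed.

Lemma rel_traceD x y : rel_trace (x + y) = rel_trace x + rel_trace y.
Proof. by rewrite -[y in LHS]opprK rel_traceB rel_traceN opprK. Qed.

Lemma rel_traceZ k x : k \is frob_fixed -> rel_trace (k * x) = k * rel_trace x.
Proof.
move=> Kk; rewrite /rel_trace mulr_sumr; apply: eq_bigr => i _.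
by rewrite exprMn (frob_fixedXq _ Kk).
Qed.

Lemma exprq_sum I (r : seq I) (a : I -> F) :
  (\sum_(i <- r) a i) ^+ q = \sum_(i <- r) a i ^+ q.
Proof.
apply: (big_morph (fun y : F => y ^+ q)) => [y z|]; first exact: exprDn_pchar.
by rewrite expr0n gtn_eqF // ltnW.
Qed.

Lemma rel_trace_fixed x : rel_trace x \is frob_fixed.
Proof.
have xqh : x ^+ (q ^ h) = x by rewrite -cardF expf_card.
apply/eqP; rewrite /rel_trace exprq_sum; under eq_bigr do rewrite -exprM -expnSr.
case: h h_gt1 xqh => // n _ xqn.
rewrite big_ord_recr [RHS]big_ord_recl /= xqn expn0 expr1 addrC.
by congr (_ + _); apply: eq_bigr.
Qed.

Lemma card_frob_fixed : (#|[set x : F | x \is frob_fixed]| <= q)%N.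
Proof.
have sizeP : size ('X^q - 'X : {poly F}) = q.+1.
  by rewrite size_polyDl ?size_polyXn // size_polyN size_polyX ltnS.
have P0 : ('X^q - 'X : {poly F}) != 0 by rewrite -size_poly_eq0 sizeP.
rewrite -ltnS -sizeP (leq_trans _ (card_roots_lt P0)) // ltnS subset_leq_card //.
by apply/subsetP => x; rewrite !inE /root !hornerE subr_eq0.
Qed.

Lemma card_rel_trace_fiber (g c : F) :
  g != 0 -> (#|[set x | rel_trace (g * x)%R == c]| <= q ^ h.-1)%N.
Proof.
move=> g0; pose P := \sum_(i < h) g ^+ (q ^ i) *: 'X^(q ^ i) - c%:P.
have hornerP x : P.[x] = rel_trace (g * x) - c.
  rewrite !hornerE horner_sum; congr (_ - _); apply: eq_bigr => i _.
  by rewrite hornerZ hornerXn exprMn.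
have sizeP : size P = (q ^ h.-1).+1.
  rewrite /P; case: h h_gt1 => // n _ /=.
  rewrite big_ord_recr /= addrAC addrC size_polyDl size_scale ?expf_neq0 ?size_polyXn //.
  rewrite ltnS (leq_trans (size_polyD _ _)) // geq_max size_polyN size_polyC.
  rewrite (leq_trans (leq_b1 _)) ?expn_gt0 ?(ltnW q_gt1) ?andbT //.
  apply: leq_trans (size_sum _ _ _) _; apply/bigmax_leqP => i _.
  by rewrite (leq_trans (size_scale_leq _ _)) // size_polyXn ltn_exp2l.
have P0 : P != 0 by rewrite -size_poly_eq0 sizeP.
rewrite -ltnS -sizeP (leq_trans _ (card_roots_lt P0)) // ltnS subset_leq_card //.
by apply/subsetP => x; rewrite !inE /root hornerP subr_eq0.
Qed.

Lemma cardFE : #|F| = (q * q ^ h.-1)%N.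
Proof. by rewrite cardF -expnS prednK // ltnW. Qed.

Lemma exp_q_h1_gt1 : (1 < q ^ h.-1)%N.
Proof. by rewrite -(expn0 q) ltn_exp2l // -ltnS prednK // ltnW. Qed.

Lemma exists_rel_trace_root : exists2 phi : F, phi != 0 & rel_trace phi = 0.
Proof.
case: (pickP [pred phi : F | (phi != 0) && (rel_trace phi == 0)]) => [phi|ker0].
  by case/andP=> phi0 /eqP; exists phi.
have tr_inj : injective rel_trace.
  move=> x y exy; apply/eqP; rewrite -subr_eq0.
  by have := ker0 (x - y); rewrite /= rel_traceB exy subrr eqxx andbT => /negbFE.
have : rel_trace @: [set: F] \subset [set x | x \is frob_fixed].
  by apply/subsetP => _ /imsetP[x _ ->]; rewrite inE rel_trace_fixed.
move/subset_leq_card/leq_trans/(_ card_frob_fixed).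
rewrite card_imset // cardsT cardFE; have := exp_q_h1_gt1; nia.
Qed.

Lemma exists_rel_trace_mul_div_neq0 (phi : F) : phi != 0 ->
  exists om, rel_trace (phi * om) != 0 /\ rel_trace (phi / om) != 0.
Proof.
move=> phi0; pose B1 := [set om | rel_trace (phi * om) == 0].
pose B2 := GRing.inv @^-1: B1.
have B10 : (0 : F) \in B1 by rewrite inE mulr0 rel_trace0.
have B20 : (0 : F) \in B2 by rewrite inE invr0. (* since [0^-1 = 0] *)
have cardB1 : (#|B1| <= q ^ h.-1)%N by apply: card_rel_trace_fiber.
have cardB2 : #|B2| = #|B1| by apply/card_preimset/invr_inj.
have [om] : exists om, om \notin B1 :|: B2.
  apply: exists_notin; apply: leq_trans (_ : _ < #|B1| + #|B2|)%N _.
    by rewrite (ltn_leqif (leq_card_setU _ _)); apply/negP => /disjointFr/(_ B10); rewrite B20.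
  rewrite cardB2 addnn -mul2n cardFE (leq_trans _ (leq_mul q_gt1 (leqnn _))) //.
  by rewrite leq_mul2l.
by rewrite !inE negb_or => /andP[]; exists om.
Qed.

Lemma exists_rel_trace_avoiding (om u tau : F) : om \isn't frob_fixed -> tau != 0 ->
  exists2 al : F, al != 0 & forall k, k \is frob_fixed -> k != 0 ->
    rel_trace (al / (k - om)) != (k - u) / (k * tau).
Proof.
move=> Kom tau0; pose Kx := [set k : F | k \is frob_fixed] :\ 0.
pose bad k := [set al | rel_trace ((k - om)^-1 * al)%R == (k - u) / (k * tau)].
have cardKx : (#|Kx| < q)%N.
  by rewrite (leq_trans _ card_frob_fixed) // (cardsD1 0 [set k : F | k \is frob_fixed]) inE rpred0.
have cardbad k : k \in Kx -> (#|bad k| <= q ^ h.-1)%N.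
  rewrite !inE => /andP[_ Kk]; apply: card_rel_trace_fiber.
  by rewrite invr_eq0 subr_eq0; apply: contraNneq Kom => <-.
have [al] : exists al, al \notin 0 |: \bigcup_(k in Kx) bad k.
  (* at most 1 + (q - 1) q^(h-1) < q^h bad values *)
  apply: exists_notin; rewrite cardsU1.
  have := leq_trans (leq_card_bigcup _ _) (leq_sum _ cardbad); rewrite sum_nat_const.
  move/(leq_add (leq_b1 (0 \notin \bigcup_(k in Kx) bad k)))/leq_ltn_trans; apply.
  move: cardKx exp_q_h1_gt1; rewrite cardFE; move: #|Kx| (q ^ h.-1)%N => k m; nia.
rewrite !inE negb_or => /andP[al0 nbad]; exists al => // k Kk k0.
apply: contra nbad => bad_k; apply/bigcupP; exists k; first by rewrite !inE k0.
by rewrite inE mulrC.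
Qed.

Section LinearSet.
Variable th : F.

Definition linvec (p : F * F) : 'rV[F]_3 := vec3 p.1 (rel_trace (th * p.1)) p.2.

Definition lin_domain : {set F * F} := [set p | (p.2 \is frob_fixed) && (p != 0)].

Definition lin_set : {set 'M[F]_3} := [set pt (linvec p) | p in lin_domain].

Lemma linvec_eq0 p : (linvec p == 0) = (p == 0).
Proof.
rewrite vec3_eq0; case: p => x c /=; apply/and3P/eqP => [[/eqP-> _ /eqP->] //|[-> ->]].
by rewrite mulr0 rel_trace0.
Qed.

Lemma linvecB p p' : linvec (p - p') = linvec p - linvec p'.
Proof. by rewrite /linvec vec3B mulrBr rel_traceB. Qed.

Lemma linvecZ k p :
  k \is frob_fixed -> k *: linvec p = linvec (k * p.1, k * p.2).
Proof. by move=> Kk; rewrite /linvec vec3Z /= mulrCA (rel_traceZ _ Kk). Qed.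

Lemma lin_set_points P : P \in lin_set -> pg_point P.
Proof.
by case/imsetP=> p; rewrite inE => /andP[_ p0] ->; rewrite pt_point ?linvec_eq0.
Qed.

Lemma lin_domain_meets_line L :
  pg_line L -> exists2 p, p \in lin_domain & (linvec p <= L)%MS.
Proof.
case/andP=> /eqP rankL _; set C := cokermx L.
have rankC : \rank C = 1%N by rewrite mxrank_coker rankL.
pose D := [set p : F * F | p.2 \is frob_fixed].
have cardD : (#|'M[F]_(1, \rank C)| < #|D|)%N.
  have -> : D = setX [set: F] [set c | c \is frob_fixed] by apply/setP => -[a c]; rewrite !inE.
  have cardF_gt0 : (0 < #|F|)%N by apply/card_gt0P; exists 0.
  have cardK_gt1 : (1 < #|[set c : F | c \is frob_fixed]|)%N.
    rewrite (leq_trans _ (subset_leq_card (_ : [set 1; 0] \subset _))) ?cards2 ?oner_neq0 //.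
    by apply/subsetP => x; rewrite !inE => /orP[]/eqP->; rewrite ?rpred0 ?rpred1.
  by rewrite card_mx rankC mul1n expn1 cardsX cardsT ltn_Pmulr.
have [p [p' [Dp Dp' pp' eqCp]]] := exists_collision (fun p => linvec p *m col_base C) cardD.
exists (p - p'); first by rewrite !inE in Dp Dp' *; rewrite rpredB // subr_eq0.
by rewrite submxE -/C -[C]mulmx_base mulmxA linvecB mulmxBl eqCp subrr mul0mx.
Qed.

Lemma lin_set_blocking : t_fold_blocking_set 1 lin_set.
Proof.
split=> [P|L /lin_domain_meets_line[p Dp pL]]; first exact: lin_set_points.
apply/card_gt0P; exists (pt (linvec p)).
by rewrite inE /pg_incident genmxE pL andbT; apply: imset_f.
Qed.

Lemma card_lin_set : th != 0 -> (#|lin_set| <= q ^ h + q ^ h.-1 + 1)%N.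
Proof.
move=> th0; pose fiber1 := [set x | rel_trace (th * x)%R == 1].
pose affine := [set pt (linvec (x, 1)) | x in [set: F]].
pose at_infinity := [set pt (linvec (x, 0)) | x in fiber1].
have ptK k p : k \is frob_fixed -> k != 0 -> pt (linvec p) = pt (linvec (k * p.1, k * p.2)).
  by move=> Kk k0; rewrite -linvecZ // ptZ.
have sub : lin_set \subset affine :|: at_infinity :|: [set pt (vec3 1 0 0)].
  apply/subsetP => _ /imsetP[[x c] /[!inE] /andP[/= Kc xc0] ->].
  have [c0|c0] := eqVneq c 0; last first.
    rewrite (ptK c^-1) ?rpredV ?invr_eq0 //= mulVf //.
    by apply/orP; left; apply/orP; left; apply: imset_f.
  subst c; have x0 : x != 0 by apply: contraNneq xc0 => ->.
  have [m0|m0] := eqVneq (rel_trace (th * x)) 0.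
    apply/orP; right; rewrite -(ptZ _ (invr_neq0 x0)) /linvec vec3Z /= m0.
    by rewrite mulVf // !mulr0.
  have Km : (rel_trace (th * x))^-1 \is frob_fixed by rewrite rpredV rel_trace_fixed.
  rewrite (ptK _ _ Km) ?invr_eq0 //= mulr0; apply/orP; left; apply/orP; right.
  by apply: imset_f; rewrite inE mulrCA (rel_traceZ _ Km) mulVf.
apply: leq_trans (subset_leq_card sub) _.
apply: leq_trans (leq_card_setU _ _) _; rewrite cards1 leq_add2r.
apply: leq_trans (leq_card_setU _ _) _; apply: leq_add.
  by rewrite -cardF -cardsT leq_imset_card.
exact: leq_trans (leq_imset_card _ _) (card_rel_trace_fiber _ th0).
Qed.

Section Collineation.
Variables om al : F.
Let tau := rel_trace th.
Let u := rel_trace (th * om ^+ 2).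
Let r := th / al.
Hypotheses (Kom : om \isn't frob_fixed) (al0 : al != 0).
Hypotheses (tau0 : tau != 0) (s0 : rel_trace (th * om) = 0) (u0 : u != 0).
Hypothesis al_avoid : forall k, k \is frob_fixed -> k != 0 ->
  rel_trace (al / (k - om)) != (k - u) / (k * tau).

Definition psi_mx : 'M[F]_3 :=
  \matrix_(i < 3, j < 3) (nth [::] [:: [:: 0; om * r; r]; [:: 1; 0; 0]; [:: - om; 1; 0]] i)`_j.

Lemma vec3_psi a b c : vec3 a b c *m psi_mx = vec3 (b - om * c) (c + om * r * a) (r * a).
Proof.
apply/rowP => j; rewrite !mxE !big_ord_recl big_ord0 !mxE /=.
by case: j => -[|[|[|j]]] lt_j3 //=; ring.
Qed.

Lemma th_neq0 : th != 0.
Proof. by apply: contraNneq tau0 => th0; rewrite /tau th0 rel_trace0. Qed.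

Lemma r_neq0 : r != 0.
Proof. by rewrite mulf_neq0 ?invr_eq0 ?th_neq0. Qed.

Lemma psi_mx_cube : psi_mx *m psi_mx *m psi_mx = r%:M.
Proof.
apply/row_matrixP => i; rewrite !rowE !mulmxA mul_mx_scalar [delta_mx 0 i]vec3_eta.
by rewrite !vec3_psi vec3Z; congr vec3; ring.
Qed.

Lemma sub_om_frob_fixed_eq0 m c : m \is frob_fixed -> c \is frob_fixed ->
  (m - om * c == 0) = (m == 0) && (c == 0).
Proof.
move=> Km Kc; have [->|c0] := eqVneq c 0; first by rewrite mulr0 subr0 andbT.
rewrite andbF subr_eq0; apply: contraNF Kom => /eqP mE.
by rewrite -(mulfK c0 om) -mE rpred_div.
Qed.

Lemma linvec_psi_relation x c x' d lam :
    c \is frob_fixed -> d \is frob_fixed -> (x', d) != 0 ->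
    linvec (x', d) *m psi_mx = lam *: linvec (x, c) ->
  let m := rel_trace (th * x) in
  m - om * c != 0 /\ m = rel_trace (c * al / (m - om * c)) * m * tau + c * u.
Proof.
move=> Kc Kd nz' + m; rewrite /linvec vec3_psi vec3Z /= -/m => /vec3_inj[E1 E2 E3].
have Km : m \is frob_fixed := rel_trace_fixed _.
have hd : d = lam * (m - om * c).
  have : d = lam * m - om * (r * x') by rewrite -E2; ring.
  by rewrite E3 => ->; ring.
have [lam0 mc0] : lam != 0 /\ m - om * c != 0.
  apply/andP; rewrite -negb_or -mulf_eq0; apply: contraNneq nz' => lmc0.
  have lc0 : lam * c = 0.
    move/eqP: lmc0; rewrite mulf_eq0 sub_om_frob_fixed_eq0 //.
    by case/orP=> [/eqP->|/andP[_ /eqP->]]; rewrite ?mul0r ?mulr0.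
  have x'0 : x' = 0 by apply: (mulfI r_neq0); rewrite E3 lc0 mulr0.
  by rewrite x'0 hd lmc0.
have d0 : d != 0 by rewrite hd mulf_neq0.
have lamE : lam = d / (m - om * c) by rewrite hd mulfK.
pose T := rel_trace (th * x') / d.
have KT : T \is frob_fixed by rewrite rpred_div ?rel_trace_fixed.
have xE : x = (T - om) * (m - om * c).
  by apply: (mulfI lam0); rewrite -E1 lamE /T; field; rewrite d0 mc0.
have TE : T = rel_trace (c * al / (m - om * c)).
  rewrite /T (_ : th * x' = d * (c * al / (m - om * c))).
    by rewrite rel_traceZ // mulrC mulKf.
  have x'E : x' = lam * c / r by rewrite -E3 mulrC mulKf ?r_neq0.
  by rewrite x'E lamE /r; field; rewrite mc0 al0 th_neq0.
split=> //; rewrite {1}/m xE.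
have -> : th * ((T - om) * (m - om * c)) =
    (T * m) * th - (T * c + m) * (th * om) + c * (th * om ^+ 2) by ring.
rewrite rel_traceD rel_traceB (rel_traceZ _ (rpredM KT Km)) (rel_traceZ _ Kc).
by rewrite (rel_traceZ _ (rpredD (rpredM KT Kc) Km)) s0 -TE -/tau -/u; ring.
Qed.

Lemma psi_relation_unsat m c : m \is frob_fixed -> c \is frob_fixed ->
  m - om * c != 0 -> m != rel_trace (c * al / (m - om * c)) * m * tau + c * u.
Proof.
move=> Km Kc; have [-> |c0 mc0] := eqVneq c 0.
  by rewrite !(mulr0, mul0r, subr0, rel_trace0, addr0).
pose k := m / c; have Kk : k \is frob_fixed by rewrite rpred_div.
have kom : k - om != 0 by rewrite subr_eq0; apply: contraNneq Kom => <-.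
have mE : m = k * c by rewrite divfK.
rewrite mE (_ : c * al / (k * c - om * c) = al / (k - om)); last by field; rewrite kom -mE.
have [-> | k0] := eqVneq k 0; first by rewrite !(mul0r, mulr0, add0r) eq_sym mulf_neq0.
apply: contraNneq (al_avoid Kk k0) => mrel.
have : (k - u) * c = rel_trace (al / (k - om)) * (k * tau) * c.
  by rewrite mulrBl {1}mrel; ring.
by move/(mulIf c0)->; rewrite mulfK // mulf_neq0.
Qed.

Lemma lin_set_psi_disjoint : [disjoint lin_set & pimage psi_mx lin_set].
Proof.
rewrite -setI_eq0; apply/eqP/setP => P; rewrite !inE; apply/negP.
case/andP=> /imsetP[[x c] /[!inE] /andP[/= Kc _] ->].
case/imsetP=> _ /imsetP[[x' d] /[!inE] /andP[/= Kd nz'] ->].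
rewrite genmx_genM => /esym/ptP[lam /(linvec_psi_relation Kc Kd nz')[mc0]].
by move/eqP; apply/negP; apply: psi_relation_unsat; rewrite ?rel_trace_fixed.
Qed.

End Collineation.

End LinearSet.

Lemma exists_blocking_set_with_disjoint_image :
  exists A M (r : F), [/\ t_fold_blocking_set 1 A, (#|A| <= q ^ h + q ^ h.-1 + 1)%N,
    r != 0, M *m M *m M = r%:M & [disjoint A & pimage M A]].
Proof.
have [phi phi0 trphi] := exists_rel_trace_root.
have [om [tr_phi_om tr_phi_inv]] := exists_rel_trace_mul_div_neq0 phi0.
have om0 : om != 0 by apply: contraNneq tr_phi_om => ->; rewrite mulr0 rel_trace0.
pose th := phi / om.
have Kom : om \isn't frob_fixed.
  by apply: contra tr_phi_om => Kom; rewrite mulrC rel_traceZ // trphi mulr0.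
have tau0 : rel_trace th != 0 by [].
have s0 : rel_trace (th * om) = 0 by rewrite divfK.
have u0 : rel_trace (th * om ^+ 2) != 0 by rewrite expr2 mulrA divfK.
have [al al0 al_avoid] := exists_rel_trace_avoiding (rel_trace (th * om ^+ 2)) Kom tau0.
exists (lin_set th), (psi_mx th om al), (th / al); split.
- exact: lin_set_blocking.
- exact/card_lin_set/th_neq0.
- exact: r_neq0.
- exact: psi_mx_cube.
- exact: lin_set_psi_disjoint.
Qed.

End RelativeTrace.

Local Close Scope ring_scope.

Theorem theorem1p3 (q h : nat) (F : finFieldType) :
  prime_power q -> (2 <= h)%N -> #|F| = (q ^ h)%N ->
  forall t : nat, (t = 2 \/ t = 3)%N ->
  exists B : {set 'M[F]_3},
    t_fold_blocking_set t B /\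
    #|B| = (t * (q ^ h + q ^ (h - 1) + 1))%N.
Proof.
move=> [p [k [p_prime [k_gt0 qE]]]] h_ge2 cardF t t23.
have q_gt1 : (1 < q)%N by rewrite qE -(expn0 p) ltn_exp2l ?prime_gt1.
have pcharF : p \in [pchar F]%R by apply: (@card_finPcharP _ _ (k * h)); rewrite // cardF qE expnM.
have pcharF_q : [pchar F]%R.-nat q by rewrite qE pnatX (eq_pnat _ (pcharf_eq pcharF)) pnat_id.
have [A [M [r [blA cardA r0 M3 dAM]]]] :=
  exists_blocking_set_with_disjoint_image q_gt1 pcharF_q cardF h_ge2.
rewrite subn1; apply: t_fold_blocking_set_orbit r0 M3 blA dAM cardA _ _.
  by case: t23 => ->.
apply: leq_trans (card_pg_points_ge F); rewrite cardF -(prednK (ltnW h_ge2)) expnS /=.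
have := exp_q_h1_gt1 q_gt1 h_ge2.
by move: (q ^ h.-1)%N => m; case: t23 => ->; nia.
Qed.
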